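(* For $t\in(0,1)$ and $n\ge0$, $$x_n=2n+1+\alpha+\beta+tR_n,$$ $$\alpha_n=y_{n+1}-y_n+t(r_n-r_{n+1}),$$ $$\mathsf p_1(n,t)=-y_n(t)+t\,r_n(t).$$
   Context: Fix $\alpha>0$, $\beta>0$, and real $A,B$ with $A\ge0$, $A+B\ge0$, not both zero; $\theta$ is the Heaviside step function. For $t\in(0,1)$ let $w(x;t)=x^\alpha(1-x)^\beta(A+B\theta(x-t))$ on $[0,1]$, and let $P_n(x)=P_n(x;t)=x^n+\mathsf p_1(n,t)x^{n-1}+\cdots$ be the monic orthogonal polynomials: $\int_0^1P_iP_jw\,dx=h_i(t)\delta_{ij}$, $h_i>0$, satisfying $xP_n=P_{n+1}+\alpha_nP_n+\beta_nP_{n-1}$, $P_{-1}=0$, $\beta_n=h_n/h_{n-1}$, $\mathsf p_1(0,t)=0$. Define $R_n(t)=B\,t^\alpha(1-t)^\beta P_n(t;t)^2/h_n$, $r_n(t)=B\,t^\alpha(1-t)^\beta P_n(t;t)P_{n-1}(t;t)/h_{n-1}$ ($r_0=0$), $x_n(t)=\frac{\beta}{h_n}\int_0^1\frac{P_n(y)^2}{1-y}\,y^\alpha(1-y)^\beta(A+B\theta(y-t))\,dy$, $y_n(t)=\frac{\beta}{h_{n-1}}\int_0^1\frac{P_n(y)P_{n-1}(y)}{1-y}\,y^\alpha(1-y)^\beta(A+B\theta(y-t))\,dy$ ($y_0=0$). *)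

From Stdlib Require Import Reals Lra ClassicalEpsilon.
Open Scope R_scope.

(* Heaviside step function (value at 0 is irrelevant for all integrals). *)
Definition theta (x : R) : R := if Rle_dec 0 x then 1 else 0.

Definition weight (al be A B t x : R) : R :=
  Rpower x al * Rpower (1 - x) be * (A + B * theta (x - t)).

(* (Possibly improper at both endpoints) Riemann integral on (a,b):
   the limit of the Riemann integrals over [c,d] as c -> a+, d -> b-. *)
Definition is_int (f : R -> R) (a b l : R) : Prop :=
  forall eps, 0 < eps -> exists del, 0 < del /\
    forall c d, a < c -> c < a + del -> b - del < d -> d < b -> c < d ->
      exists pr : Riemann_integrable f c d, Rabs (RiemannInt pr - l) < eps.

Definition Int01 (f : R -> R) : R := epsilon (inhabits 0) (is_int f 0 1).

Fixpoint polysum (a : nat -> R) (x : R) (m : nat) : R :=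
  match m with
  | O => 0
  | S m' => polysum a x m' + a m' * x ^ m'
  end.

Definition Pm (c : nat -> nat -> R) (n : nat) (x : R) : R :=
  x ^ n + polysum (c n) x n.

Definition p1 (c : nat -> nat -> R) (n : nat) : R :=
  match n with O => 0 | S m => c n m end.

Definition Pprev (c : nat -> nat -> R) (n : nat) (x : R) : R :=
  match n with O => 0 | S m => Pm c m x end.

Definition Rn (al be B t : R) (c : nat -> nat -> R) (h : nat -> R) (n : nat) : R :=
  B * Rpower t al * Rpower (1 - t) be * (Pm c n t) ^ 2 / h n.

Definition rn (al be B t : R) (c : nat -> nat -> R) (h : nat -> R) (n : nat) : R :=
  match n with
  | O => 0
  | S m => B * Rpower t al * Rpower (1 - t) be * Pm c n t * Pm c m t / h m
  end.

Definition xn (al be A B t : R) (c : nat -> nat -> R) (h : nat -> R) (n : nat) : R :=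
  be / h n * Int01 (fun y => (Pm c n y) ^ 2 / (1 - y) * weight al be A B t y).

Definition yn (al be A B t : R) (c : nat -> nat -> R) (h : nat -> R) (n : nat) : R :=
  match n with
  | O => 0
  | S m => be / h m *
      Int01 (fun y => Pm c n y * Pm c m y / (1 - y) * weight al be A B t y)
  end.

From Stdlib Require Import Reals Lra Lia ClassicalEpsilon FunctionalExtensionality.
Open Scope R_scope.

(* Integration by parts against the Jacobi factor x^al (1-x)^be gives, for a
   polynomial Q,
     be * int Q/(1-y) w = (al+1+be) int Q w + int y Q' w + B t^(al+1) (1-t)^be Q(t):
   the boundary terms at 0 and 1 vanish and the jump of w at t leaves the last
   term.  With Q = P_n^2 and Q = P_(n+1) P_n the right-hand side is evaluated by
   orthogonality, since y P_n' = n P_n + (lower degree); this yields x_n and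
   y_(n+1) = -p_1(n+1) + t r_(n+1).  Integrating x P_n^2 in two ways, once by the
   recurrence and once by expanding x P_n, gives alpha_n = p_1(n) - p_1(n+1). *)

Lemma is_int_ext f g a b l :
  (forall x, a < x < b -> f x = g x) -> is_int f a b l -> is_int g a b l.
Proof.
  intros Efg If eps Heps.
  destruct (If eps Heps) as [del [Hdel Idel]].
  exists del; split; [exact Hdel|].
  intros c d Hac Hca Hdb Hbd Hcd.
  destruct (Idel c d Hac Hca Hdb Hbd Hcd) as [pr Hpr].
  assert (Ecd : forall x, Rmin c d <= x <= Rmax c d -> f x = g x).
  { intros x; rewrite Rmin_left, Rmax_right by lra; intros; apply Efg; lra. }
  exists (Riemann_integrable_ext g Ecd pr).
  rewrite <- (RiemannInt_P18 pr); [exact Hpr | lra |].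
  intros x Hx; apply Efg; lra.
Qed.

Lemma is_int_plus_scal f g a b l1 l2 k :
  is_int f a b l1 -> is_int g a b l2 ->
  is_int (fun x => f x + k * g x) a b (l1 + k * l2).
Proof.
  intros If Ig eps Heps.
  set (e := eps / 2 / (Rabs k + 1)).
  assert (Hk := Rabs_pos k).
  assert (He : 0 < e) by (unfold e; apply Rdiv_lt_0_compat; lra).
  assert (Hke : Rabs k * e <= eps / 2).
  { unfold e; apply (Rmult_le_reg_r (Rabs k + 1)); [lra|].
    field_simplify; [nra | lra]. }
  destruct (If (eps / 2)) as [d1 [Hd1 I1]]; [lra|].
  destruct (Ig e He) as [d2 [Hd2 I2]].
  exists (Rmin d1 d2); split; [apply Rmin_pos; lra|].
  intros c d Hac Hca Hdb Hbd Hcd.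
  assert (m1 := Rmin_l d1 d2); assert (m2 := Rmin_r d1 d2).
  destruct (I1 c d) as [pr1 Hpr1]; try lra.
  destruct (I2 c d) as [pr2 Hpr2]; try lra.
  exists (RiemannInt_P10 k pr1 pr2).
  rewrite (RiemannInt_P13 pr1 pr2).
  replace (RiemannInt pr1 + k * RiemannInt pr2 - (l1 + k * l2))
    with ((RiemannInt pr1 - l1) + k * (RiemannInt pr2 - l2)) by ring.
  eapply Rle_lt_trans; [apply Rabs_triang|].
  rewrite Rabs_mult.
  assert (Rabs k * Rabs (RiemannInt pr2 - l2) <= Rabs k * e)
    by (apply Rmult_le_compat_l; lra).
  lra.
Qed.

Lemma is_int_scal f a b l k :
  is_int f a b l -> is_int (fun x => k * f x) a b (k * l).
Proof.
  intros If; replace (k * l) with (l + (k - 1) * l) by ring.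
  eapply is_int_ext; [| exact (is_int_plus_scal _ _ _ _ _ _ (k - 1) If If)].
  intros x _; cbv beta; ring.
Qed.

Lemma is_int_plus f g a b l1 l2 :
  is_int f a b l1 -> is_int g a b l2 -> is_int (fun x => f x + g x) a b (l1 + l2).
Proof.
  intros If Ig; replace (l1 + l2) with (l1 + 1 * l2) by ring.
  eapply is_int_ext; [| exact (is_int_plus_scal _ _ _ _ _ _ 1 If Ig)].
  intros x _; cbv beta; ring.
Qed.

Lemma is_int_zero a b : is_int (fun _ => 0) a b 0.
Proof.
  intros eps Heps; exists 1; split; [lra|].
  intros c d _ _ _ _ _.
  exists (RiemannInt_P14 c d 0).
  change (Rabs (RiemannInt (RiemannInt_P14 c d 0) - 0) < eps).
  rewrite RiemannInt_P15, Rmult_0_l, Rminus_0_r, Rabs_R0; exact Heps.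
Qed.

Lemma is_int_unique f a b l1 l2 :
  a < b -> is_int f a b l1 -> is_int f a b l2 -> l1 = l2.
Proof.
  intros Hab I1 I2.
  destruct (Req_dec l1 l2) as [E | NE]; [exact E | exfalso].
  set (e := Rabs (l1 - l2) / 2).
  assert (He : 0 < e)
    by (assert (0 < Rabs (l1 - l2)) by (apply Rabs_pos_lt; lra); unfold e; lra).
  destruct (I1 e He) as [d1 [Hd1 K1]].
  destruct (I2 e He) as [d2 [Hd2 K2]].
  set (d := Rmin (Rmin d1 d2) (b - a)).
  assert (Hd : 0 < d) by (unfold d; repeat apply Rmin_pos; lra).
  assert (m1 : d <= d1) by (unfold d; eapply Rle_trans; apply Rmin_l).
  assert (m2 : d <= d2) by (unfold d; eapply Rle_trans; [apply Rmin_l | apply Rmin_r]).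
  assert (m3 : d <= b - a) by (unfold d; apply Rmin_r).
  destruct (K1 (a + d / 4) (b - d / 4)) as [p1 Q1]; try lra.
  destruct (K2 (a + d / 4) (b - d / 4)) as [p2 Q2]; try lra.
  rewrite (RiemannInt_P5 p2 p1) in Q2.
  assert (Rabs (l1 - l2) <= Rabs (RiemannInt p1 - l2) + Rabs (RiemannInt p1 - l1)).
  { replace (l1 - l2) with ((RiemannInt p1 - l2) - (RiemannInt p1 - l1)) by ring.
    eapply Rle_trans; [apply Rabs_triang | rewrite Rabs_Ropp; lra]. }
  unfold e in *; lra.
Qed.

Lemma Int01_eq f l : is_int f 0 1 l -> Int01 f = l.
Proof.
  intros If; unfold Int01; apply (is_int_unique f 0 1); [lra | | exact If].
  apply epsilon_spec; exists l; exact If.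
Qed.

Lemma is_int_plus_boundary g h a b t L K phi psi :
  a < t < b -> is_int g a b L ->
  limit1_in phi (fun x => a < x < b) 0 a -> limit1_in psi (fun x => a < x < b) 0 b ->
  (forall c d, a < c < t -> t < d < b ->
     exists pr : Riemann_integrable h c d, RiemannInt pr = phi c + psi d + K) ->
  is_int (fun x => g x + h x) a b (L + K).
Proof.
  intros Ht Ig Lphi Lpsi Ih eps Heps.
  assert (He : 0 < eps / 3) by lra.
  destruct (Ig _ He) as [d1 [Hd1 I1]].
  destruct (Lphi _ He) as [d2 [Hd2 L2]].
  destruct (Lpsi _ He) as [d3 [Hd3 L3]].
  set (del := Rmin (Rmin d1 d2) (Rmin d3 (Rmin (t - a) (b - t)))).
  assert (Hd : 0 < del) by (unfold del; repeat apply Rmin_pos; lra).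
  assert (m1 : del <= d1) by (unfold del; eapply Rle_trans; apply Rmin_l).
  assert (m2 : del <= d2) by (unfold del; eapply Rle_trans; [apply Rmin_l | apply Rmin_r]).
  assert (m3 : del <= d3) by (unfold del; eapply Rle_trans; [apply Rmin_r | apply Rmin_l]).
  assert (m4 : del <= t - a)
    by (unfold del; do 2 (eapply Rle_trans; [apply Rmin_r |]); apply Rmin_l).
  assert (m5 : del <= b - t)
    by (unfold del; do 2 (eapply Rle_trans; [apply Rmin_r |]); apply Rmin_r).
  exists del; split; [exact Hd|].
  intros c d Hac Hca Hdb Hbd Hcd.
  destruct (I1 c d) as [prg Hprg]; try lra.
  destruct (Ih c d ltac:(lra) ltac:(lra)) as [prh Hprh].
  assert (Ephi : Rabs (phi c - 0) < eps / 3).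
  { apply (L2 c); split; [lra|]. simpl; unfold R_dist; rewrite Rabs_right; lra. }
  assert (Epsi : Rabs (psi d - 0) < eps / 3).
  { apply (L3 d); split; [lra|]. simpl; unfold R_dist; rewrite Rabs_left; lra. }
  rewrite Rminus_0_r in Ephi, Epsi.
  replace (fun x => g x + h x) with (fun x => g x + 1 * h x)
    by (apply functional_extensionality; intros; ring).
  exists (RiemannInt_P10 1 prg prh).
  rewrite (RiemannInt_P13 prg prh), Hprh.
  replace (RiemannInt prg + 1 * (phi c + psi d + K) - (L + K))
    with ((RiemannInt prg - L) + phi c + psi d) by ring.
  assert (T1 := Rabs_triang (RiemannInt prg - L + phi c) (psi d)).
  assert (T2 := Rabs_triang (RiemannInt prg - L) (phi c)).
  lra.
Qed.

Lemma RiemannInt_antiderivative f G a b :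
  a <= b -> (forall x, a <= x <= b -> continuity_pt f x) ->
  (forall x, a <= x <= b -> derivable_pt_lim G x (f x)) ->
  forall pr : Riemann_integrable f a b, RiemannInt pr = G b - G a.
Proof.
  intros Hab Cf DG pr.
  rewrite (RiemannInt_P20 Hab (FTC_P1 Hab Cf) pr).
  assert (AG : antiderivative f G a b).
  { split; [| exact Hab]. intros x Hx.
    exists (exist _ (f x) (DG x Hx)). reflexivity. }
  destruct (antiderivative_Ucte f _ _ _ _ (RiemannInt_P29 Hab Cf) AG) as [C EC].
  rewrite !EC; [ring | split; lra | split; lra].
Qed.

Lemma Riemann_integrable_theta_shift c t :
  c < t -> Riemann_integrable (fun y => theta (y - t)) c t.
Proof.
  intros Hct eps.
  assert (Ad : adapted_couple (fun y => theta (y - t)) c t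
                 (cons c (cons t nil)) (cons 0 nil)).
  { repeat split.
    - intros i Hi; simpl in Hi; replace i with 0%nat by lia; simpl; lra.
    - simpl; unfold Rmin; destruct (Rle_dec c t); lra.
    - simpl; unfold Rmax; destruct (Rle_dec c t); lra.
    - intros i Hi x Hx; destruct i as [| i]; [| simpl in Hi; lia].
      unfold open_interval in Hx; simpl in Hx |- *.
      unfold theta; destruct (Rle_dec 0 (x - t)); lra. }
  exists (mkStepFun (existT _ _ (existT _ _ Ad))).
  exists (mkStepFun (StepFun_P4 c t 0)).
  split.
  - intros x _; simpl; unfold fct_cte; rewrite Rminus_diag, Rabs_R0; lra.
  - rewrite StepFun_P18, Rmult_0_l, Rabs_R0; apply cond_pos.
Qed.

Section Jump.
Variables (A B t c d : R) (H : R -> R).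
Hypothesis Hctd : c < t < d.

(* On [c, t] the jump factor equals A except at t itself, which is absorbed
   by the step function theta (y - t). *)
Lemma Riemann_integrable_jump :
  (forall x, c <= x <= d -> continuity_pt H x) ->
  Riemann_integrable (fun y => H y * (A + B * theta (y - t))) c d.
Proof.
  intros CH.
  assert (Cconst : forall k x, continuity_pt (fun _ => k) x)
    by (intros; apply continuity_pt_const; intros ? ?; reflexivity).
  apply RiemannInt_P24 with t.
  - assert (E : forall x, Rmin c t <= x <= Rmax c t ->
        A * H x + (B * H t) * theta (x - t) = H x * (A + B * theta (x - t))).
    { intros x; rewrite Rmin_left, Rmax_right by lra; intros Hx.
      unfold theta; destruct (Rle_dec 0 (x - t)).
      - replace x with t by lra; ring.
      - ring. }
    apply (Riemann_integrable_ext _ E), RiemannInt_P10;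
      [| apply Riemann_integrable_theta_shift; lra].
    apply continuity_implies_RiemannInt; [lra |].
    intros x Hx; apply (continuity_pt_mult (fun _ => A) H); [| apply CH; lra].
    apply Cconst.
  - assert (E : forall x, Rmin t d <= x <= Rmax t d ->
        (A + B) * H x = H x * (A + B * theta (x - t))).
    { intros x; rewrite Rmin_left, Rmax_right by lra; intros Hx.
      unfold theta; destruct (Rle_dec 0 (x - t)); [ring | lra]. }
    apply (Riemann_integrable_ext _ E), continuity_implies_RiemannInt; [lra |].
    intros x Hx; apply (continuity_pt_mult (fun _ => A + B) H); [| apply CH; lra].
    apply Cconst.
Qed.

Lemma RiemannInt_jump_antiderivative G :
  (forall x, c <= x <= d -> continuity_pt H x) ->
  (forall x, c <= x <= d -> derivable_pt_lim G x (H x)) ->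
  forall pr : Riemann_integrable (fun y => H y * (A + B * theta (y - t))) c d,
  RiemannInt pr = A * (G t - G c) + (A + B) * (G d - G t).
Proof.
  intros CH DG pr.
  assert (Ct : c <= t <= d) by lra.
  rewrite <- (RiemannInt_P26 (RiemannInt_P22 pr Ct) (RiemannInt_P23 pr Ct) pr).
  assert (Piece : forall k a b, c <= a -> a <= b -> b <= d ->
     (forall x, a < x < b -> H x * (A + B * theta (x - t)) = k * H x) ->
     forall p : Riemann_integrable (fun y => H y * (A + B * theta (y - t))) a b,
     RiemannInt p = k * (G b - G a)).
  { intros k a b Hca Hab Hbd Ek p.
    assert (Ck : forall x, a <= x <= b -> continuity_pt (fun y => k * H y) x)
      by (intros x Hx; apply (continuity_pt_scal H k), CH; lra).
    rewrite (RiemannInt_P18 p (continuity_implies_RiemannInt Hab Ck) Hab Ek).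
    replace (k * (G b - G a)) with (k * G b - k * G a) by ring.
    apply (RiemannInt_antiderivative _ (fun y => k * G y)); [exact Hab | exact Ck |].
    intros x Hx; apply (derivable_pt_lim_scal G k), DG; lra. }
  rewrite (Piece A c t), (Piece (A + B) t d); try lra; intros x Hx;
    unfold theta; destruct (Rle_dec 0 (x - t)); try lra; ring.
Qed.
End Jump.

Definition jacobi_weight (al be x : R) : R := Rpower x al * Rpower (1 - x) be.

Lemma Rpower_pos x a : 0 < Rpower x a.
Proof. apply exp_pos. Qed.

Lemma Rpower_minus_1 x a : 0 < x -> Rpower x (a - 1) = Rpower x a / x.
Proof.
  intros Hx; unfold Rminus; rewrite Rpower_plus, Rpower_Ropp, Rpower_1 by exact Hx.
  reflexivity.
Qed.

Lemma Rpower_lt_of_lt x a e :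
  0 < a -> 0 < e -> 0 < x < Rpower e (/ a) -> Rpower x a < e.
Proof.
  intros Ha He Hx.
  rewrite <- (Rpower_1 e He), <- (Rinv_l a), <- Rpower_mult by lra.
  apply Rlt_Rpower_l; lra.
Qed.

Lemma limit1_in_ext f g D l x0 :
  (forall x, D x -> f x = g x) -> limit1_in f D l x0 -> limit1_in g D l x0.
Proof.
  intros Efg Lf eps Heps; destruct (Lf eps Heps) as [alp [Halp Hf]].
  exists alp; split; [exact Halp|].
  intros x [Dx Hx]; rewrite <- Efg by exact Dx; apply Hf; split; assumption.
Qed.

Lemma limit1_in_scal_0 f D k x0 :
  limit1_in f D 0 x0 -> limit1_in (fun x => k * f x) D 0 x0.
Proof.
  intros Lf; rewrite <- (Rmult_0_r k).
  exact (limit_mul (fun _ => k) f D k 0 x0 (limit_free (fun _ => k) D x0 x0) Lf).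
Qed.

Lemma limit1_in_continuity_pt f D x0 :
  continuity_pt f x0 -> (forall x, D x -> x <> x0) -> limit1_in f D (f x0) x0.
Proof.
  intros Cf HD; apply limit1_imp with (D_x no_cond x0); [| exact Cf].
  intros x Dx; split; [exact I | apply not_eq_sym, HD, Dx].
Qed.

Lemma limit_Rpower_0 a : 0 < a ->
  limit1_in (fun x => Rpower x a) (fun x => 0 < x < 1) 0 0.
Proof.
  intros Ha eps Heps; exists (Rpower eps (/ a)); split; [apply Rpower_pos|].
  intros x [Dx Hx]; simpl in *; unfold R_dist in *.
  rewrite Rminus_0_r in *; rewrite Rabs_right in Hx by lra.
  rewrite Rabs_right by (apply Rle_ge, Rlt_le, Rpower_pos).
  apply Rpower_lt_of_lt; lra.
Qed.

Lemma limit_Rpower_one_minus_1 a : 0 < a ->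
  limit1_in (fun x => Rpower (1 - x) a) (fun x => 0 < x < 1) 0 1.
Proof.
  intros Ha eps Heps; exists (Rpower eps (/ a)); split; [apply Rpower_pos|].
  intros x [Dx Hx]; simpl in *; unfold R_dist in *.
  rewrite Rminus_0_r, Rabs_right by (apply Rle_ge, Rlt_le, Rpower_pos).
  rewrite Rabs_left in Hx by lra.
  apply Rpower_lt_of_lt; lra.
Qed.

Lemma derivable_pt_lim_Rpower_one_minus a x : x < 1 ->
  derivable_pt_lim (fun y => Rpower (1 - y) a) x (- (a * Rpower (1 - x) (a - 1))).
Proof.
  intros Hx.
  replace (- (a * Rpower (1 - x) (a - 1)))
    with (a * Rpower (1 - x) (a - 1) * (0 - 1)) by ring.
  apply (derivable_pt_lim_comp (fun y => 1 - y) (fun z => Rpower z a)).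
  - apply (derivable_pt_lim_minus (fun _ => 1) id);
      [apply derivable_pt_lim_const | apply derivable_pt_lim_id].
  - apply derivable_pt_lim_power; lra.
Qed.

Lemma derivable_pt_lim_jacobi_weight al be x : 0 < x < 1 ->
  derivable_pt_lim (jacobi_weight al be) x
    ((al / x - be / (1 - x)) * jacobi_weight al be x).
Proof.
  intros Hx.
  assert (D := derivable_pt_lim_mult _ _ x _ _
    (derivable_pt_lim_power x al ltac:(lra))
    (derivable_pt_lim_Rpower_one_minus be x ltac:(lra))).
  rewrite !Rpower_minus_1 in D by lra.
  replace ((al / x - be / (1 - x)) * jacobi_weight al be x) with
    (al * (Rpower x al / x) * Rpower (1 - x) be +
     Rpower x al * - (be * (Rpower (1 - x) be / (1 - x))))
    by (unfold jacobi_weight; field; lra).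
  exact D.
Qed.

Lemma continuity_pt_jacobi_weight al be x : 0 < x < 1 ->
  continuity_pt (jacobi_weight al be) x.
Proof.
  intros Hx; apply derivable_continuous_pt.
  eexists; apply derivable_pt_lim_jacobi_weight, Hx.
Qed.

Section BoundaryTerm.
Variables (al be : R) (Q Q' : R -> R).

Definition boundary_term (y : R) : R := y * jacobi_weight al be y * Q y.

Definition boundary_term_deriv (y : R) : R :=
  ((al + 1 + be) * Q y + y * Q' y) * jacobi_weight al be y
  - be * (Q y / (1 - y)) * jacobi_weight al be y.

Lemma derivable_pt_lim_boundary_term x : 0 < x < 1 ->
  derivable_pt_lim Q x (Q' x) ->
  derivable_pt_lim boundary_term x (boundary_term_deriv x).
Proof.
  intros Hx DQ.
  assert (D := derivable_pt_lim_mult _ _ x _ _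
    (derivable_pt_lim_mult id _ x _ _ (derivable_pt_lim_id x)
       (derivable_pt_lim_jacobi_weight al be x Hx)) DQ).
  replace (boundary_term_deriv x) with
    ((1 * jacobi_weight al be x + x * ((al / x - be / (1 - x)) * jacobi_weight al be x))
       * Q x + x * jacobi_weight al be x * Q' x)
    by (unfold boundary_term_deriv; field; lra).
  exact D.
Qed.

Lemma continuity_pt_boundary_term_deriv x : 0 < x < 1 ->
  continuity_pt Q x -> continuity_pt Q' x -> continuity_pt boundary_term_deriv x.
Proof.
  intros Hx CQ CQ'.
  assert (Cw := continuity_pt_jacobi_weight al be x Hx).
  assert (Cid := derivable_continuous_pt _ _ (derivable_id x)).
  apply (continuity_pt_minus (fun y => _ * jacobi_weight al be y)
                             (fun y => _ * jacobi_weight al be y));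
    apply (continuity_pt_mult _ (jacobi_weight al be)); try exact Cw.
  - apply (continuity_pt_plus (fun y => _ * Q y) (fun y => y * Q' y)).
    + apply (continuity_pt_scal Q), CQ.
    + apply (continuity_pt_mult id Q'); [exact Cid | exact CQ'].
  - apply (continuity_pt_scal (fun y => Q y / (1 - y))).
    apply (continuity_pt_div Q (fun y => 1 - y)); [exact CQ | | lra].
    apply (continuity_pt_minus (fun _ => 1) id); [| exact Cid].
    apply continuity_pt_const; intros ? ?; reflexivity.
Qed.

Lemma limit_boundary_term_0 : -1 < al ->
  continuity_pt Q 0 -> limit1_in boundary_term (fun y => 0 < y < 1) 0 0.
Proof.
  intros Hal CQ.
  apply limit1_in_ext with
    (fun y => Rpower y (al + 1) * Rpower (1 - y) be * Q y).
  { intros y Hy; unfold boundary_term, jacobi_weight.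
    rewrite Rpower_plus, Rpower_1 by lra; ring. }
  replace 0 with (0 * Rpower (1 - 0) be * Q 0) at 1 by ring.
  apply limit_mul; [apply limit_mul |].
  - apply limit_Rpower_0; lra.
  - apply (limit1_in_continuity_pt (fun y => Rpower (1 - y) be)); [| intros; lra].
    apply derivable_continuous_pt; eexists.
    apply derivable_pt_lim_Rpower_one_minus; lra.
  - apply limit1_in_continuity_pt; [exact CQ | intros; lra].
Qed.

Lemma limit_boundary_term_1 : 0 < be ->
  continuity_pt Q 1 -> limit1_in boundary_term (fun y => 0 < y < 1) 0 1.
Proof.
  intros Hbe CQ.
  apply limit1_in_ext with
    (fun y => (y * Rpower y al) * Rpower (1 - y) be * Q y).
  { intros; unfold boundary_term, jacobi_weight; ring. }
  replace 0 with (1 * Rpower 1 al * 0 * Q 1) at 1 by ring.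
  apply limit_mul; [apply limit_mul; [apply limit_mul |] |].
  - apply lim_x.
  - apply (limit1_in_continuity_pt (fun y => Rpower y al)); [| intros; lra].
    apply derivable_continuous_pt; eexists.
    apply derivable_pt_lim_power; lra.
  - apply limit_Rpower_one_minus_1, Hbe.
  - apply limit1_in_continuity_pt; [exact CQ | intros; lra].
Qed.
End BoundaryTerm.

(* With G = boundary_term, Q/(1-y) w = ((al+1+be) Q w + y Q' w) / be
   - G' (A + B theta(y-t)) / be, and the second part integrates exactly. *)
Lemma is_int_div_one_minus al be A B t Q Q' L2 L3 :
  -1 < al -> 0 < be -> 0 < t < 1 ->
  (forall x, derivable_pt_lim Q x (Q' x)) -> (forall x, continuity_pt Q' x) ->
  is_int (fun y => Q y * weight al be A B t y) 0 1 L2 ->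
  is_int (fun y => y * Q' y * weight al be A B t y) 0 1 L3 ->
  is_int (fun y => Q y / (1 - y) * weight al be A B t y) 0 1
    (((al + 1 + be) * L2 + L3 + B * (t * jacobi_weight al be t * Q t)) / be).
Proof.
  intros Hal Hbe Ht DQ CQ' I2 I3.
  set (G := boundary_term al be Q).
  set (G' := boundary_term_deriv al be Q Q').
  assert (CQ : forall x, continuity_pt Q x)
    by (intros x; apply derivable_continuous_pt; exists (Q' x); apply DQ).
  assert (CG' : forall x, 0 < x < 1 -> continuity_pt (fun y => - / be * G' y) x)
    by (intros; apply continuity_pt_scal, continuity_pt_boundary_term_deriv; auto).
  assert (Ig := is_int_plus_scal _ _ _ _ _ _ (/ be)
                  (is_int_scal _ _ _ _ ((al + 1 + be) / be) I2) I3).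
  assert (Iq := is_int_plus_boundary _
    (fun y => - / be * G' y * (A + B * theta (y - t))) 0 1 t _ (- B * (- / be * G t))
    (fun c => - A * (- / be * G c)) (fun d => (A + B) * (- / be * G d)) Ht Ig).
  replace (((al + 1 + be) * L2 + L3 + B * (t * jacobi_weight al be t * Q t)) / be)
    with ((al + 1 + be) / be * L2 + / be * L3 + - B * (- / be * G t))
    by (unfold G, boundary_term; field; lra).
  eapply is_int_ext; [| apply Iq].
  - intros y Hy; unfold G', boundary_term_deriv, weight, jacobi_weight; field; lra.
  - do 2 apply limit1_in_scal_0; apply limit_boundary_term_0; auto.
  - do 2 apply limit1_in_scal_0; apply limit_boundary_term_1; auto.
  - intros c d Hc Hd.
    exists (Riemann_integrable_jump A B t c d _ ltac:(lra)
              (fun x Hx => CG' x ltac:(lra))).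
    rewrite (RiemannInt_jump_antiderivative A B t c d _ ltac:(lra)
               (fun y => - / be * G y) (fun x Hx => CG' x ltac:(lra))); [ring |].
    intros x Hx; apply (derivable_pt_lim_scal G).
    apply derivable_pt_lim_boundary_term; [lra | apply DQ].
Qed.

Fixpoint polysum_deriv (a : nat -> R) (x : R) (m : nat) : R :=
  match m with
  | O => 0
  | S m' => polysum_deriv a x m' + a m' * (INR m' * x ^ pred m')
  end.

Definition shift_coef (a : nat -> R) (i : nat) : R :=
  match i with O => 0 | S j => a j end.

Lemma polysum_ext a b x m :
  (forall i, (i < m)%nat -> a i = b i) -> polysum a x m = polysum b x m.
Proof.
  induction m as [| m IH]; intros E; simpl; [reflexivity |].
  rewrite IH, E by auto; reflexivity.
Qed.

Lemma polysum_plus_scal a b k x m :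
  polysum (fun i => a i + k * b i) x m = polysum a x m + k * polysum b x m.
Proof. induction m as [| m IH]; simpl; [ring | rewrite IH; ring]. Qed.

Lemma mult_polysum a x m : x * polysum a x m = polysum (shift_coef a) x (S m).
Proof.
  induction m as [| m IH]; simpl in *; [ring |].
  rewrite Rmult_plus_distr_l, IH; ring.
Qed.

Lemma derivable_pt_lim_polysum a m x :
  derivable_pt_lim (fun y => polysum a y m) x (polysum_deriv a x m).
Proof.
  induction m as [| m IH]; simpl.
  - apply derivable_pt_lim_const.
  - apply (derivable_pt_lim_plus (fun y => polysum a y m) (fun y => a m * y ^ m));
      [exact IH |].
    apply (derivable_pt_lim_scal (fun y => y ^ m)), derivable_pt_lim_pow.
Qed.

Lemma continuity_pt_polysum_deriv a m x :
  continuity_pt (fun y => polysum_deriv a y m) x.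
Proof.
  induction m as [| m IH]; simpl.
  - apply continuity_pt_const; intros ? ?; reflexivity.
  - apply (continuity_pt_plus _ (fun y => a m * (INR m * y ^ pred m))); [exact IH |].
    apply (continuity_pt_scal (fun y => INR m * y ^ pred m)),
          (continuity_pt_scal (fun y => y ^ pred m)).
    apply derivable_continuous_pt; eexists; apply derivable_pt_lim_pow.
Qed.

Lemma mult_polysum_deriv a x m :
  x * polysum_deriv a x m = polysum (fun k => INR k * a k) x m.
Proof.
  induction m as [| m IH]; simpl; [ring |].
  rewrite Rmult_plus_distr_l, IH.
  destruct m; simpl; ring.
Qed.

Section MonicPolynomials.
Variable c : nat -> nat -> R.

Definition Pm_deriv (n : nat) (x : R) : R :=
  INR n * x ^ pred n + polysum_deriv (c n) x n.

Lemma pow_eq_Pm n x : x ^ n = Pm c n x - polysum (c n) x n.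
Proof. unfold Pm; ring. Qed.

Lemma Pm_eq_polysum m x :
  Pm c m x = polysum (fun k => if Nat.ltb k m then c m k else 1) x (S m).
Proof.
  unfold Pm; simpl; rewrite Nat.ltb_irrefl.
  rewrite (polysum_ext (fun k => if Nat.ltb k m then c m k else 1) (c m)); [ring |].
  intros i Hi; apply Nat.ltb_lt in Hi; rewrite Hi; reflexivity.
Qed.

Lemma Pprev_eq_polysum n : exists a, forall x, Pprev c n x = polysum a x n.
Proof.
  destruct n as [| m]; [exists (fun _ => 0); reflexivity |].
  eexists; intros x; apply Pm_eq_polysum.
Qed.

Lemma derivable_pt_lim_Pm n x : derivable_pt_lim (Pm c n) x (Pm_deriv n x).
Proof.
  apply (derivable_pt_lim_plus (fun y => y ^ n) (fun y => polysum (c n) y n)).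
  - apply derivable_pt_lim_pow.
  - apply derivable_pt_lim_polysum.
Qed.

Lemma continuity_pt_Pm n x : continuity_pt (Pm c n) x.
Proof. apply derivable_continuous_pt; eexists; apply derivable_pt_lim_Pm. Qed.

Lemma continuity_pt_Pm_deriv n x : continuity_pt (Pm_deriv n) x.
Proof.
  apply (continuity_pt_plus (fun y => INR n * y ^ pred n)).
  - apply (continuity_pt_scal (fun y => y ^ pred n)).
    apply derivable_continuous_pt; eexists; apply derivable_pt_lim_pow.
  - apply continuity_pt_polysum_deriv.
Qed.

Lemma mult_Pm_deriv n x :
  x * Pm_deriv n x = INR n * Pm c n x + polysum (fun k => (INR k - INR n) * c n k) x n.
Proof.
  unfold Pm_deriv, Pm; rewrite Rmult_plus_distr_l, mult_polysum_deriv.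
  rewrite (polysum_ext _ (fun k => (INR k - INR n) * c n k + INR n * c n k))
    by (intros; ring).
  rewrite polysum_plus_scal.
  destruct n; simpl; ring.
Qed.

Lemma mult_Pm n x :
  x * Pm c n x =
  Pm c (S n) x + polysum (fun i => shift_coef (c n) i + -1 * c (S n) i) x (S n).
Proof.
  rewrite polysum_plus_scal; unfold Pm.
  rewrite Rmult_plus_distr_l, mult_polysum; simpl; ring.
Qed.
End MonicPolynomials.

Section Orthogonality.
Variables (al be A B t : R) (c : nat -> nat -> R) (h : nat -> R).
Hypothesis orth : forall i j : nat,
  is_int (fun x => Pm c i x * Pm c j x * weight al be A B t x) 0 1
         (if Nat.eq_dec i j then h i else 0).

Lemma is_int_Pm_sq n :
  is_int (fun x => Pm c n x * Pm c n x * weight al be A B t x) 0 1 (h n).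
Proof. generalize (orth n n); destruct (Nat.eq_dec n n); [auto | congruence]. Qed.

Lemma is_int_Pm_Pm_neq i j : i <> j ->
  is_int (fun x => Pm c i x * Pm c j x * weight al be A B t x) 0 1 0.
Proof. generalize (orth i j); destruct (Nat.eq_dec i j); [congruence | auto]. Qed.

Lemma is_int_polysum_Pm a m n : (m <= n)%nat ->
  is_int (fun x => polysum a x m * Pm c n x * weight al be A B t x) 0 1 0.
Proof.
  revert a; induction m as [| m IH]; intros a Hmn.
  - eapply is_int_ext; [| apply is_int_zero]; intros; simpl; ring.
  - assert (I := is_int_plus_scal _ _ _ _ _ _ (a m) (IH a ltac:(lia))
      (is_int_plus_scal _ _ _ _ _ _ (-1) (is_int_Pm_Pm_neq m n ltac:(lia)) (IH (c m) ltac:(lia)))).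
    replace (0 + a m * (0 + -1 * 0)) with 0 in I by ring.
    eapply is_int_ext; [| exact I].
    intros x _; cbv beta; simpl polysum; rewrite (pow_eq_Pm c m x); ring.
Qed.

Lemma is_int_polysum_succ_Pm a n :
  is_int (fun x => polysum a x (S n) * Pm c n x * weight al be A B t x) 0 1 (a n * h n).
Proof.
  assert (I := is_int_plus_scal _ _ _ _ _ _ (a n)
    (is_int_polysum_Pm (fun i => a i + - a n * c n i) n n (le_n n)) (is_int_Pm_sq n)).
  rewrite Rplus_0_l in I.
  eapply is_int_ext; [| exact I].
  intros x _; cbv beta; rewrite polysum_plus_scal; simpl polysum.
  rewrite (pow_eq_Pm c n x); ring.
Qed.

Hypothesis Hal : -1 < al.
Hypothesis Hbe : 0 < be.
Hypothesis Ht : 0 < t < 1.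
Hypothesis Hh : forall i, 0 < h i.

Lemma is_int_Pm_mult_div_one_minus i j L2 L3 :
  is_int (fun y => Pm c i y * Pm c j y * weight al be A B t y) 0 1 L2 ->
  is_int (fun y => y * (Pm_deriv c i y * Pm c j y + Pm c i y * Pm_deriv c j y)
                   * weight al be A B t y) 0 1 L3 ->
  is_int (fun y => Pm c i y * Pm c j y / (1 - y) * weight al be A B t y) 0 1
    (((al + 1 + be) * L2 + L3 + B * (t * jacobi_weight al be t * (Pm c i t * Pm c j t)))
     / be).
Proof.
  apply (is_int_div_one_minus al be A B t (fun y => Pm c i y * Pm c j y)); auto.
  - intros x; apply (derivable_pt_lim_mult (Pm c i) (Pm c j));
      apply derivable_pt_lim_Pm.
  - intros x; apply (continuity_pt_plus (fun y => Pm_deriv c i y * Pm c j y)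
                                        (fun y => Pm c i y * Pm_deriv c j y));
      apply continuity_pt_mult;
      auto using continuity_pt_Pm, continuity_pt_Pm_deriv.
Qed.

Lemma xn_eq n :
  xn al be A B t c h n = 2 * INR n + 1 + al + be + t * Rn al be B t c h n.
Proof.
  set (b := fun k => (INR k - INR n) * c n k).
  assert (I3 : is_int (fun y => y * (Pm_deriv c n y * Pm c n y + Pm c n y * Pm_deriv c n y)
                                * weight al be A B t y) 0 1 (2 * (0 + INR n * h n))).
  { eapply is_int_ext; [| exact (is_int_scal _ _ _ _ 2 (is_int_plus_scal _ _ _ _ _ _ (INR n)
      (is_int_polysum_Pm b n n (le_n n)) (is_int_Pm_sq n)))].
    intros y _; cbv beta; symmetry.
    transitivity (2 * (y * Pm_deriv c n y) * Pm c n y * weight al be A B t y); [ring |].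
    rewrite mult_Pm_deriv; unfold b; ring. }
  assert (K := is_int_Pm_mult_div_one_minus n n _ _ (is_int_Pm_sq n) I3).
  unfold xn; erewrite Int01_eq;
    [| eapply is_int_ext; [| exact K]; intros y _; cbv beta; unfold Rdiv; ring].
  unfold Rn, jacobi_weight; field; split; [apply Rgt_not_eq, Hh | lra].
Qed.

Lemma yn_succ_eq n :
  yn al be A B t c h (S n) = - p1 c (S n) + t * rn al be B t c h (S n).
Proof.
  set (b1 := fun k => (INR k - INR (S n)) * c (S n) k).
  set (b := fun k => (INR k - INR n) * c n k).
  assert (I := is_int_plus _ _ _ _ _ _
    (is_int_plus_scal _ _ _ _ _ _ (INR (S n) + INR n)
       (is_int_polysum_succ_Pm b1 n) (is_int_Pm_Pm_neq (S n) n (Nat.neq_succ_diag_l n)))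
    (is_int_polysum_Pm b n (S n) (Nat.le_succ_diag_r n))).
  replace (b1 n * h n + (INR (S n) + INR n) * 0 + 0) with (b1 n * h n) in I by ring.
  assert (I3 : is_int (fun y => y * (Pm_deriv c (S n) y * Pm c n y + Pm c (S n) y * Pm_deriv c n y)
                                * weight al be A B t y) 0 1 (b1 n * h n)).
  { eapply is_int_ext; [| exact I]; intros y _; cbv beta; symmetry.
    transitivity ((y * Pm_deriv c (S n) y) * Pm c n y * weight al be A B t y
                  + Pm c (S n) y * (y * Pm_deriv c n y) * weight al be A B t y); [ring |].
    rewrite !mult_Pm_deriv; fold b1 b; ring. }
  assert (K := is_int_Pm_mult_div_one_minus (S n) n _ _
                 (is_int_Pm_Pm_neq (S n) n (Nat.neq_succ_diag_l n)) I3).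
  unfold yn; rewrite (Int01_eq _ _ K).
  unfold rn, p1, b1, jacobi_weight; rewrite S_INR.
  field; split; [apply Rgt_not_eq, Hh | lra].
Qed.

Lemma p1_eq n : p1 c n = - yn al be A B t c h n + t * rn al be B t c h n.
Proof. destruct n as [| m]; [simpl; ring | rewrite yn_succ_eq; simpl; ring]. Qed.

Lemma recurrence_coef_eq a0 b0 n :
  (forall x, x * Pm c n x = Pm c (S n) x + a0 * Pm c n x + b0 * Pprev c n x) ->
  a0 = p1 c n - p1 c (S n).
Proof.
  intros Hrec.
  destruct (Pprev_eq_polysum c n) as [a Ha].
  set (d := fun i => shift_coef (c n) i + -1 * c (S n) i).
  assert (I1 := is_int_plus _ _ _ _ _ _
    (is_int_plus_scal _ _ _ _ _ _ a0
       (is_int_Pm_Pm_neq (S n) n (Nat.neq_succ_diag_l n)) (is_int_Pm_sq n))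
    (is_int_scal _ _ _ _ b0 (is_int_polysum_Pm a n n (le_n n)))).
  assert (I2 := is_int_plus _ _ _ _ _ _
    (is_int_Pm_Pm_neq (S n) n (Nat.neq_succ_diag_l n)) (is_int_polysum_succ_Pm d n)).
  assert (E : 0 + a0 * h n + b0 * 0 = 0 + d n * h n).
  { apply (is_int_unique (fun x => x * Pm c n x * Pm c n x * weight al be A B t x) 0 1);
      [lra | eapply is_int_ext; [| exact I1] | eapply is_int_ext; [| exact I2]];
      intros x _; cbv beta; symmetry.
    - rewrite Hrec, Ha; ring.
    - rewrite mult_Pm; fold d; ring. }
  assert (Ea : a0 = d n) by (apply (Rmult_eq_reg_r (h n)); [lra | apply Rgt_not_eq, Hh]).
  rewrite Ea; unfold d; destruct n; simpl; ring.
Qed.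
End Orthogonality.

Theorem lemma3p1 (al be A B t : R) (c : nat -> nat -> R) (h : nat -> R)
  (alpha : nat -> R) :
  0 < al -> 0 < be -> 0 <= A -> 0 <= A + B -> ~ (A = 0 /\ B = 0) ->
  0 < t < 1 ->
  (forall i j : nat,
     is_int (fun x => Pm c i x * Pm c j x * weight al be A B t x) 0 1
            (if Nat.eq_dec i j then h i else 0)) ->
  (forall i : nat, 0 < h i) ->
  (forall (n : nat) (x : R),
     x * Pm c n x = Pm c (S n) x + alpha n * Pm c n x
                    + (match n with O => 0 | S m => h n / h m end) * Pprev c n x) ->
  forall n : nat,
    xn al be A B t c h n = 2 * INR n + 1 + al + be + t * Rn al be B t c h n /\
    alpha n = yn al be A B t c h (S n) - yn al be A B t c h n
              + t * (rn al be B t c h n - rn al be B t c h (S n)) /\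
    p1 c n = - yn al be A B t c h n + t * rn al be B t c h n.
Proof.
  intros Hal Hbe _ _ _ Ht Horth Hh Hrec n.
  assert (Hal1 : -1 < al) by lra.
  assert (Hp1 := p1_eq al be A B t c h Horth Hal1 Hbe Ht Hh).
  split; [exact (xn_eq al be A B t c h Horth Hal1 Hbe Ht Hh n) |].
  split; [| apply Hp1].
  rewrite (recurrence_coef_eq al be A B t c h Horth Hh _ _ n (Hrec n)), !Hp1.
  ring.
Qed.
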